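(* Let $\mathcal{K}$ be a finite simplicial complex with a fixed total order on its vertex set, let $\Lambda_S$ be its stories algebra and $\mathcal{I}\subseteq\Lambda_S$ the simplicial ideal described below. Then the quotient algebra $\Lambda_S/\mathcal{I}$ is isomorphic (as an algebra) to the incidence algebra $\mathcal{I}(\mathcal{K})$ of $\mathcal{K}$ (ordered by inclusion).
   Context: A simplicial complex $\mathcal{K}$ on a finite non-empty vertex set $V$ is a collection of non-empty subsets of $V$ containing all singletons and closed under non-empty subsets; it is a poset under inclusion; $\dim P=|P|-1$. For $P=\{v_0,\ldots,v_n\}$ in increasing vertex order, $\epsilon_{v_iP}=(-1)^i$. Incidence algebra: $\mathcal{I}(\mathcal{K})$ is the complex vector space with basis $\{|P\rangle\langle Q|:P,Q\in\mathcal{K},\ P\subseteq Q\}$ and product $|P\rangle\langle Q|\cdot|R\rangle\langle S|=\delta_{QR}|P\rangle\langle S|$. Stories algebra: $\Lambda_S=\bigoplus_{n\ge0}\Lambda_S^n$, where $\Lambda_S^n$ has basis the sequences $\langle P_0,\ldots,P_n\rangle$ of simplices with $P_{i-1}\neq P_i$ for all $i$, and product $\langle P_0,\ldots,P_n\rangle\cdot\langle Q_0,\ldots,Q_m\rangle=\langle P_0,\ldots,P_n,Q_1,\ldots,Q_m\rangle$ if $P_n=Q_0$, and $0$ otherwise. A story is fair if for each $i\ge1$ there is $v_i\in P_i$ with $P_{i-1}=P_i\setminus\{v_i\}$, otherwise unfair; for a fair story $w$, $\epsilon_w=\prod_{i=1}^n\epsilon_{v_iP_i}$. $\mathcal{I}_N^n$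 is the span of unfair $n$-stories, $\mathcal{I}_S^n$ is the span of all $\epsilon_ww-\epsilon_{w'}w'$ with $w,w'$ fair $n$-stories having the same first simplex and the same last simplex, and $\mathcal{I}=\bigoplus_{n\ge1}(\mathcal{I}_N^n\oplus\mathcal{I}_S^n)$ (a two-sided ideal of $\Lambda_S$). *)

From Stdlib Require Import Reals.
From mathcomp Require Import all_boot all_algebra.
From mathcomp Require Import freeg.
From mathcomp Require Import complex.
From mathcomp Require Import Rstruct.

Set Implicit Arguments.
Unset Strict Implicit.
Unset Printing Implicit Defensive.

Import GRing.Theory.
Local Open Scope ring_scope.

Definition C : fieldType := R[i].

Section SimplicialComplex.
(* Vertex set V = 'I_n = {0 < 1 < ... < n-1}, with its natural total order. *)
Variable n : nat.

Definition simplex := {set 'I_n}.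

Definition is_simplicial_complex (K : {set simplex}) : Prop :=
  [/\ set0 \notin K,
      (forall v : 'I_n, [set v] \in K) &
      (forall P Q : simplex, P \in K -> Q \subset P -> Q != set0 -> Q \in K)].

(* A story <P_0,...,P_m> is represented by the sequence [:: P_0; ...; P_m];
   it is an m-story when its size is m+1. *)
Definition story := seq simplex.

Definition is_story (K : {set simplex}) (s : story) : bool :=
  [&& (0 < size s)%N, all (fun P => P \in K) s &
      path (fun P Q => P != Q) (head set0 s) (behead s)].

Definition first (s : story) : simplex := head set0 s.
Definition final (s : story) : simplex := last set0 s.

Definition fair_step (P Q : simplex) : bool :=
  [exists v : 'I_n, (v \in Q) && (P == Q :\ v)].

Definition fair (s : story) : bool := path fair_step (head set0 s) (behead s).

(* epsilon_{vP} = (-1)^i where v is the i-th element (from 0) of P *)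
Definition eps_vP (v : 'I_n) (P : simplex) : C :=
  (-1) ^+ #|[set u in P | (u < v)%N]|.

(* For a fair step P_{i-1} = P_i \ {v_i}, this is epsilon_{v_i P_i}
   (the product ranges over the singleton P_i :\: P_{i-1} = {v_i}). *)
Definition eps_step (P Q : simplex) : C := \prod_(v in Q :\: P) eps_vP v Q.

Fixpoint eps_path (P : simplex) (p : story) : C :=
  if p is Q :: p' then eps_step P Q * eps_path Q p' else 1.

Definition eps_story (s : story) : C := eps_path (head set0 s) (behead s).

(* Ambient free C-vector space on all sequences of simplices; Lambda_S is the
   subspace spanned by the stories of K. *)
Definition FS := {freeg story / C}.

Definition in_stories_alg (K : {set simplex}) (x : FS) : Prop :=
  forall s, s \in dom x -> is_story K s.

Definition story_mul (s t : story) : FS :=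
  if final s == first t then << s ++ behead t >> else 0.

Definition stories_mul (x y : FS) : FS :=
  fglift (fun s => fglift (fun t => story_mul s t) y) x.

Definition stories_one (K : {set simplex}) : FS :=
  \sum_(P in K) << [:: P] >>.

Definition unfair_gen (K : {set simplex}) (g : FS) : Prop :=
  exists s, [/\ is_story K s, (1 < size s)%N, ~~ fair s & g = << s >>].

Definition fair_gen (K : {set simplex}) (g : FS) : Prop :=
  exists s t, [/\ [&& is_story K s, is_story K t, fair s & fair t],
    (1 < size s)%N /\ size s = size t,
    first s = first t, final s = final t &
    g = eps_story s *: << s >> - eps_story t *: << t >>].

Definition in_simplicial_ideal (K : {set simplex}) (x : FS) : Prop :=
  exists gs : seq (C * FS),
    (forall cg, cg \in gs -> unfair_gen K cg.2 \/ fair_gen K cg.2) /\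
    x = \sum_(cg <- gs) cg.1 *: cg.2.

(* Ambient free vector space on pairs (P,Q); the basis element |P><Q| is the
   pair (P,Q); I(K) is spanned by the |P><Q| with P, Q in K, P subset Q. *)
Definition FI := {freeg (simplex * simplex) / C}.

Definition in_incidence_alg (K : {set simplex}) (f : FI) : Prop :=
  forall PQ, PQ \in dom f -> [&& PQ.1 \in K, PQ.2 \in K & PQ.1 \subset PQ.2].

Definition ket_mul (a b : simplex * simplex) : FI :=
  if a.2 == b.1 then << (a.1, b.2) >> else 0.

Definition incidence_mul (f g : FI) : FI :=
  fglift (fun a => fglift (fun b => ket_mul a b) g) f.

Definition incidence_one (K : {set simplex}) : FI :=
  \sum_(P in K) << (P, P) >>.

End SimplicialComplex.

From HB Require Import structures.
From Pilot Require Import Defs.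
From Stdlib Require Import Reals.
From mathcomp Require Import all_boot all_algebra freeg complex Rstruct.

Set Implicit Arguments.
Unset Strict Implicit.
Unset Printing Implicit Defensive.

Import GRing.Theory.
Local Open Scope ring_scope.

(* The isomorphism is induced by the linear map phi sending a fair story w to
   eps_w |first w><last w| and an unfair story to 0.  Fairness and the sign
   eps_w are multiplicative under concatenation, so phi is an algebra map.
   For P \subset Q, adding the vertices of Q \ P one at a time in increasing
   order is a fair story from P to Q; the induced map psi is a section of phi,
   whence surjectivity.  Finally w - psi (phi w) lies in I for every story w:
   an unfair w is a generator of I_N, and a fair w has the same length as the
   canonical story c with the same ends (each fair step adds one vertex), so
   w - psi (phi w) = eps_w (eps_w w - eps_c c) is a generator of I_S.  Hence
   ker phi \subset I, and phi kills every generator of I. *)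

Section FreegLift.
Variables (R : nzRingType) (T : choiceType) (M : lmodType R).
Implicit Types (F G : T -> M) (D : {freeg T / R}).

Lemma freegUZ (k : R) (z : T) : << k *g z >> = k *: << z >> :> {freeg T / R}.
Proof. by apply/eqP/freeg_eqP => y; rewrite coeffZ !coeffU mul1r. Qed.

Lemma freeg_expand D : D = \sum_(z <- dom D) coeff z D *: << z >>.
Proof. by rewrite -{1}[D]freeg_sumE; apply: eq_bigr => z _; rewrite freegUZ. Qed.

HB.instance Definition _ F :=
  GRing.isZmodMorphism.Build {freeg T / R} M (fglift F) (lift_is_additive F).

Lemma fgliftU F z : fglift F << z >> = F z.
Proof. by rewrite liftU scale1r. Qed.

Lemma fglift_expand F D : fglift F D = \sum_(z <- dom D) coeff z D *: F z.
Proof.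
by rewrite -{1}[D]freeg_sumE raddf_sum; apply: eq_bigr => z _; exact: liftU.
Qed.

Lemma fglift_is_scalable F : scalable (fglift F).
Proof.
move=> c D; rewrite -{1}[D]freeg_sumE scaler_sumr raddf_sum fglift_expand scaler_sumr.
by apply: eq_bigr => z _; rewrite freegUZ scalerA -freegUZ /= liftU scalerA.
Qed.

HB.instance Definition _ F :=
  GRing.isScalable.Build R {freeg T / R} M *:%R (fglift F) (fglift_is_scalable F).

Lemma fgliftZ F c D : fglift F (c *: D) = c *: fglift F D.
Proof. exact: fglift_is_scalable. Qed.

Lemma eq_in_fglift F G D : {in dom D, F =1 G} -> fglift F D = fglift G D.
Proof. by move=> FG; rewrite !fglift_expand; apply: eq_big_seq => z /FG ->. Qed.

End FreegLift.

Lemma linear_fglift (R : nzRingType) (T : choiceType) (M M' : lmodType R)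
    (f : {linear M -> M'}) (F : T -> M) (D : {freeg T / R}) :
  f (fglift F D) = fglift (f \o F) D.
Proof.
by rewrite !fglift_expand linear_sum; apply: eq_bigr => z _; rewrite linearZ.
Qed.

Lemma fglift_exchange (R : comNzRingType) (T T' : choiceType) (M : lmodType R)
    (H : T -> T' -> M) (D : {freeg T / R}) (E : {freeg T' / R}) :
  fglift (fun a => fglift (H a) E) D = fglift (fun b => fglift (H^~ b) D) E.
Proof.
rewrite fglift_expand; under eq_bigr do rewrite fglift_expand scaler_sumr.
rewrite exchange_big fglift_expand; apply: eq_bigr => b _.
by rewrite fglift_expand scaler_sumr; apply: eq_bigr => a _; rewrite !scalerA mulrC.
Qed.

Lemma dom_fglift (R : nzRingType) (T T' : choiceType) (F : T -> {freeg T' / R})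
    (D : {freeg T / R}) y :
  y \in dom (fglift F D) -> exists2 z, z \in dom D & y \in dom (F z).
Proof.
rewrite fglift_expand => /dom_sum_subset/flattenP[l /mapP[z]].
by rewrite mem_filter => /andP[_ zD] -> /domZ_subset yF; exists z.
Qed.

Section FairStories.
Variable n : nat.
Implicit Types (P Q X : simplex n) (p : seq (simplex n)) (s t : story n).

Lemma eps_vP_sqr (v : 'I_n) P : eps_vP v P ^+ 2 = 1.
Proof. exact: sqrr_sign. Qed.

Lemma eps_step_sqr P Q : eps_step P Q ^+ 2 = 1.
Proof. by rewrite /eps_step -prodrXl; apply: big1 => v _; exact: eps_vP_sqr. Qed.

Lemma eps_path_sqr P p : eps_path P p ^+ 2 = 1.
Proof.
elim: p P => [|Q p IH] P /=; first exact: expr1n.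
by rewrite exprMn eps_step_sqr IH mulr1.
Qed.

Lemma scale_eps_storyK (M : lmodType Defs.C) s (x : M) :
  eps_story s *: (eps_story s *: x) = x.
Proof. by rewrite scalerA -expr2 eps_path_sqr scale1r. Qed.

Lemma eps_path_cat P p q :
  eps_path P (p ++ q) = eps_path P p * eps_path (last P p) q.
Proof. by elim: p P => [|Q p IH] P /=; rewrite ?mul1r // IH mulrA. Qed.

Lemma fair_step_neq P Q : fair_step P Q -> P != Q.
Proof.
case/existsP=> v /andP[vQ /eqP->]; apply/eqP => /setP/(_ v).
by rewrite !inE eqxx vQ.
Qed.

Lemma fair_step_sub P Q : fair_step P Q -> P \subset Q.
Proof. by case/existsP=> v /andP[_ /eqP->]; rewrite subD1set. Qed.

Lemma fair_step_card P Q : fair_step P Q -> #|Q| = #|P|.+1.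
Proof. by case/existsP=> v /andP[vQ /eqP->]; rewrite (cardsD1 v Q) vQ. Qed.

Lemma fair_path_mem P p : path (@fair_step n) P p ->
  {in P :: p, forall X, P \subset X /\ X \subset last P p}.
Proof.
elim: p P => [|Q p IH] P /=; first by move=> _ X; rewrite inE => /eqP->.
case/andP=> /fair_step_sub PQ /IH{}IH X; rewrite inE => /predU1P[->|/IH[QX ->]].
  by split=> //; exact: subset_trans PQ (IH Q (mem_head _ _)).2.
by split=> //; exact: subset_trans PQ QX.
Qed.

Lemma fair_path_card P p :
  path (@fair_step n) P p -> #|last P p| = (#|P| + size p)%N.
Proof.
elim: p P => [|Q p IH] P /=; first by rewrite addn0.
by case/andP=> /fair_step_card PQ /IH->; rewrite PQ addSnnS.
Qed.

Lemma fair_story_mem s X :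
  fair s -> X \in s -> first s \subset X /\ X \subset final s.
Proof. by case: s => [|P p] // fs; exact: fair_path_mem. Qed.

Lemma fair_story_sub s : fair s -> first s \subset final s.
Proof.
case: s => [|P p] fs; first exact: subxx.
exact: (fair_story_mem fs (mem_last P p)).1.
Qed.

Lemma fair_story_size s : s != [::] -> fair s ->
  size s = (#|final s| - #|first s|).+1.
Proof.
by case: s => [|P p] //= _ /fair_path_card; rewrite /final /= => ->; rewrite addKn.
Qed.

Lemma unfair_size s : ~~ fair s -> (1 < size s)%N.
Proof. by case: s => [|P [|Q p]]. Qed.

Lemma fair_is_story (K : {set simplex n}) s :
  s != [::] -> fair s -> all (mem K) s -> is_story K s.
Proof.
case: s => [|P p] // _ fs sK; apply/and3P; split=> //.
by apply: sub_path fs => ? ?; exact: fair_step_neq.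
Qed.

Lemma story_ends (K : {set simplex n}) s :
  is_story K s -> [/\ s != [::], first s \in K & final s \in K].
Proof.
case: s => [|P p] // /and3P[_ /allP sK _]; rewrite /first /final /=.
by split; [|exact/sK/mem_head|exact/sK/mem_last].
Qed.

Lemma fair_cat s t : s != [::] -> final s = first t ->
  [/\ fair (s ++ behead t) = fair s && fair t,
      eps_story (s ++ behead t) = eps_story s * eps_story t,
      first (s ++ behead t) = first s &
      final (s ++ behead t) = final t].
Proof.
case: s => [|P p] // _; case: t => [|Q q]; rewrite /final /first /= => e.
  by rewrite !cats0 andbT /eps_story mulr1.
by rewrite /fair /eps_story /= cat_path eps_path_cat last_cat e.
Qed.

Fixpoint grow P (vs : seq 'I_n) : story n :=
  if vs is v :: vs' then P :: grow (v |: P) vs' else [:: P].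

Definition canonical_story P Q := grow P (enum (Q :\: P)).

Lemma grow_cons P vs : grow P vs = P :: behead (grow P vs).
Proof. by case: vs. Qed.

Lemma last_grow X P vs : last X (grow P vs) = P :|: [set v in vs].
Proof.
elim: vs X P => [|v vs IH] X P /=; first by apply/setP => x; rewrite !inE orbF.
by rewrite IH; apply/setP => x; rewrite !inE orbA (orbC (x == v)).
Qed.

Lemma fair_grow P vs :
  uniq vs -> {in vs, forall v, v \notin P} -> fair (grow P vs).
Proof.
elim: vs P => [|v vs IH] P //= /andP[vvs uvs] vsP.
have vP : v \notin P by apply: vsP; exact: mem_head.
rewrite /fair /= [grow _ vs]grow_cons /=; apply/andP; split.
  by apply/existsP; exists v; rewrite setU11 setU1K ?eqxx.
have /IH : {in vs, forall w, w \notin v |: P}.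
  move=> w wvs; rewrite !inE negb_or vsP ?inE ?wvs ?orbT // andbT.
  by apply: contraNneq vvs => <-.
by rewrite /fair [grow _ vs]grow_cons; apply.
Qed.

Lemma canonical_story_fair P Q : fair (canonical_story P Q).
Proof.
apply: fair_grow; first exact: enum_uniq.
by move=> v; rewrite mem_enum !inE => /andP[].
Qed.

Lemma first_canonical_story P Q : first (canonical_story P Q) = P.
Proof. by rewrite /first /canonical_story grow_cons. Qed.

Lemma final_canonical_story P Q : P \subset Q -> final (canonical_story P Q) = Q.
Proof.
move=> PQ; rewrite /final last_grow -[RHS](setID Q P) (setIidPr PQ); congr (_ :|: _).
by apply/setP => x; rewrite inE mem_enum.
Qed.

Lemma canonical_story_refl P : canonical_story P P = [:: P].
Proof. by rewrite /canonical_story setDv enum_set0. Qed.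

Lemma canonical_story_is_story (K : {set simplex n}) P Q : is_simplicial_complex K ->
  P \in K -> Q \in K -> P \subset Q -> is_story K (canonical_story P Q).
Proof.
case=> K0 _ Kc PK QK PQ; have fc := canonical_story_fair P Q.
apply: fair_is_story => //; first by rewrite /canonical_story grow_cons.
apply/allP => X /(fair_story_mem fc).
rewrite first_canonical_story final_canonical_story // => -[PX XQ].
apply: Kc QK XQ _; apply: contraNneq K0 => X0.
by move: PX; rewrite X0 subset0 => /eqP <-.
Qed.

End FairStories.

Section StoriesToIncidence.
Variable n : nat.
Implicit Types (P Q : simplex n) (s t : story n) (x y : FS n) (f : FI n).

Definition phi_story s : FI n :=
  if fair s then eps_story s *: << (first s, final s) >> else 0.

Definition psi_pair (PQ : simplex n * simplex n) : FS n :=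
  eps_story (canonical_story PQ.1 PQ.2) *: << canonical_story PQ.1 PQ.2 >>.

Definition phi : {linear FS n -> FI n} := fglift phi_story.
Definition psi : {linear FI n -> FS n} := fglift psi_pair.

Lemma phiU s : phi << s >> = phi_story s.
Proof. exact: fgliftU. Qed.

Lemma psiU PQ : psi << PQ >> = psi_pair PQ.
Proof. exact: fgliftU. Qed.

Lemma phi_story_mul s t : s != [::] ->
  phi (story_mul s t) = incidence_mul (phi_story s) (phi_story t).
Proof.
move=> s0; rewrite /story_mul /incidence_mul.
have [e|ne] := eqVneq (final s) (first t) => /=.
  rewrite phiU /phi_story; have [-> -> -> ->] := fair_cat s0 e.
  case: (fair s) (fair t) => [] [] /=; rewrite ?(raddf0, fgliftZ, fgliftU, scaler0) //.
  by rewrite /ket_mul /= e eqxx scalerA.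
rewrite linear0 /phi_story.
case: (fair s) (fair t) => [] [] /=; rewrite ?(raddf0, fgliftZ, fgliftU, scaler0) //.
by rewrite /ket_mul /= (negbTE ne) !scaler0.
Qed.

Lemma stories_alg_nil (K : {set simplex n}) x : in_stories_alg K x -> [::] \notin dom x.
Proof. by move=> xK; apply/negP => /xK. Qed.

Lemma phi_mul x y : [::] \notin dom x ->
  phi (stories_mul x y) = incidence_mul (phi x) (phi y).
Proof.
move=> x0; rewrite /stories_mul /incidence_mul linear_fglift.
rewrite [fglift _ (phi x)]linear_fglift; apply: eq_in_fglift => s sx /=.
rewrite linear_fglift; under [RHS]eq_in_fglift do rewrite linear_fglift.
rewrite fglift_exchange; apply: eq_in_fglift => t _ /=.
by rewrite phi_story_mul //; apply: contraNneq x0 => <-.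
Qed.

Lemma phi_one (K : {set simplex n}) : phi (stories_one K) = incidence_one K.
Proof.
rewrite /stories_one linear_sum; apply: eq_bigr => P _.
by rewrite phiU /phi_story /= /eps_story /= scale1r.
Qed.

Lemma phi_in_incidence (K : {set simplex n}) x :
  in_stories_alg K x -> in_incidence_alg K (phi x).
Proof.
move=> xK PQ /dom_fglift[s /xK sK]; rewrite /phi_story.
case: ifP => [fs|_]; last by rewrite dom0.
move/domZ_subset; rewrite domU1 inE => /eqP-> /=.
by have [_ -> ->] := story_ends sK; rewrite fair_story_sub.
Qed.

Lemma psi_in_stories (K : {set simplex n}) f : is_simplicial_complex K ->
  in_incidence_alg K f -> in_stories_alg K (psi f).
Proof.
move=> HK fK s /dom_fglift[[P Q] /fK/and3P[PK QK PQ]].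
by move/domZ_subset; rewrite domU1 inE => /eqP->; exact: canonical_story_is_story.
Qed.

Lemma phi_psi_pair P Q : P \subset Q -> phi (psi_pair (P, Q)) = << (P, Q) >>.
Proof.
move=> PQ; rewrite /psi_pair linearZ_LR phiU /phi_story canonical_story_fair /=.
by rewrite scale_eps_storyK first_canonical_story final_canonical_story.
Qed.

Lemma psiK (K : {set simplex n}) f : in_incidence_alg K f -> phi (psi f) = f.
Proof.
move=> fK; rewrite linear_fglift fglift_expand [RHS]freeg_expand.
by apply: eq_big_seq => -[P Q] /fK/and3P[_ _ PQ] /=; rewrite phi_psi_pair.
Qed.

End StoriesToIncidence.

Arguments phi {n}.
Arguments psi {n}.

Section SimplicialIdeal.
Variables (n : nat) (K : {set simplex n}).
Implicit Types (s : story n) (x g : FS n).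
Local Notation ideal := (in_simplicial_ideal K).

Lemma simplicial_ideal0 : ideal 0.
Proof. by exists [::]; rewrite big_nil. Qed.

Lemma simplicial_idealD x y : ideal x -> ideal y -> ideal (x + y).
Proof.
case=> [gs [gsP ->]] [hs [hsP ->]]; exists (gs ++ hs); rewrite big_cat; split=> //.
by move=> cg; rewrite mem_cat => /orP[/gsP|/hsP].
Qed.

Lemma simplicial_idealZ c x : ideal x -> ideal (c *: x).
Proof.
case=> [gs [gsP ->]]; exists [seq (c * cg.1, cg.2) | cg <- gs]; split.
  by move=> _ /mapP[cg /gsP ? ->].
by rewrite big_map scaler_sumr; apply: eq_bigr => cg _; rewrite scalerA.
Qed.

Lemma simplicial_ideal_gen g : unfair_gen K g \/ fair_gen K g -> ideal g.
Proof.
move=> gP; exists [:: (1, g)]; rewrite big_seq1 scale1r.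
by split=> // cg /[1!inE] /eqP->.
Qed.

Lemma simplicial_ideal_fglift (T : choiceType) (F : T -> FS n)
    (D : {freeg T / Defs.C}) :
  {in dom D, forall z, ideal (F z)} -> ideal (fglift F D).
Proof.
move=> FI; rewrite fglift_expand big_seq; apply: big_ind => //.
- exact: simplicial_ideal0.
- exact: simplicial_idealD.
- by move=> z /FI; exact: simplicial_idealZ.
Qed.

Lemma phi_unfair_gen g : unfair_gen K g -> phi g = 0.
Proof. by case=> s [_ _ fs ->]; rewrite phiU /phi_story (negbTE fs). Qed.

Lemma phi_fair_gen g : fair_gen K g -> phi g = 0.
Proof.
case=> s [t [/and4P[_ _ fs ft] _ ef el ->]].
rewrite linearB !linearZ_LR !phiU /phi_story fs ft /= scalerN !scale_eps_storyK.
by rewrite ef el subrr.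
Qed.

Lemma phi_simplicial_ideal x : ideal x -> phi x = 0.
Proof.
case=> gs [gsP ->]; rewrite linear_sum big1_seq // => cg /andP[_ /gsP].
by case=> [/phi_unfair_gen|/phi_fair_gen]; rewrite linearZ_LR => ->; rewrite scaler0.
Qed.

Lemma sub_psi_phiU (HK : is_simplicial_complex K) s :
  is_story K s -> ideal (<< s >> - psi (phi << s >>)).
Proof.
move=> sK; have [s0 PK QK] := story_ends sK.
rewrite phiU /phi_story; case: ifP => fs; last first.
  rewrite linear0 subr0; apply: simplicial_ideal_gen; left.
  by exists s; rewrite unfair_size ?fs.
rewrite linearZ_LR psiU /psi_pair /=.
have [s1|] := ltnP 1 (size s); last first.
  case: s {sK fs PK QK} s0 => [|P [|? ?]] // _ _.
  rewrite /first /final /= canonical_story_refl /eps_story /= !scale1r subrr.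
  exact: simplicial_ideal0.
set c := canonical_story _ _.
have cK : is_story K c by apply: canonical_story_is_story => //; exact: fair_story_sub.
have cf : fair c := canonical_story_fair _ _.
have c_first : first c = first s := first_canonical_story _ _.
have c_final : final c = final s by apply: final_canonical_story; exact: fair_story_sub.
have [c0 _ _] := story_ends cK.
have size_c : size c = size s by rewrite !fair_story_size // c_first c_final.
rewrite -[<< s >>](scale_eps_storyK s) -scalerBr.
apply/simplicial_idealZ/simplicial_ideal_gen.
by right; exists s, c; rewrite sK cK fs cf size_c.
Qed.

Lemma sub_psi_phi (HK : is_simplicial_complex K) x :
  in_stories_alg K x -> ideal (x - psi (phi x)).
Proof.
move=> xK.
have -> : x - psi (phi x) = fglift (fun s => << s >> - psi (phi << s >>)) x.
  rewrite fglift_expand (eq_bigr _ (fun s _ => scalerBr _ _ _)) sumrB -freeg_expand.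
  congr (_ - _); rewrite {1}[x]freeg_expand !linear_sum.
  by apply: eq_bigr => s _; rewrite !linearZ_LR.
by apply: simplicial_ideal_fglift => s /xK; exact: sub_psi_phiU.
Qed.

Lemma phi_eq0 (HK : is_simplicial_complex K) x :
  in_stories_alg K x -> phi x = 0 <-> ideal x.
Proof.
move=> xK; split; last exact: phi_simplicial_ideal.
by move=> phix0; have := sub_psi_phi HK xK; rewrite phix0 linear0 subr0.
Qed.

End SimplicialIdeal.

Theorem mainTheorem3 (n : nat) (K : {set simplex n}) :
  (0 < n)%N -> is_simplicial_complex K ->
  exists phi : {linear FS n -> FI n},
    [/\ (forall x, in_stories_alg K x -> in_incidence_alg K (phi x)),
        (forall x y, in_stories_alg K x -> in_stories_alg K y ->
           phi (stories_mul x y) = incidence_mul (phi x) (phi y)),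
        phi (stories_one K) = incidence_one K,
        (forall f, in_incidence_alg K f ->
           exists x, in_stories_alg K x /\ phi x = f) &
        (forall x, in_stories_alg K x ->
           (phi x = 0 <-> in_simplicial_ideal K x))].
Proof.
move=> _ HK; exists phi; split.
- exact: phi_in_incidence.
- by move=> x y /stories_alg_nil x0 _; exact: phi_mul.
- exact: phi_one.
- by move=> f fK; exists (psi f); split; [exact: psi_in_stories | exact: psiK fK].
- exact: phi_eq0.
Qed.
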